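(* Let $\mathcal{D}\subseteq\mathbb{R}^m$ be a polyhedron and $c,d\in\mathbb{R}^m$, and consider the problem $\inf\ c^\top x/d^\top x$ subject to $d^\top x>0$, $x\in\mathcal{D}$. If $\mathcal{D}\cap\{x: d^\top x>0\}\ne\emptyset$, then the optimal value of this problem is $-\infty$ if and only if at least one of the following holds: (1) there exists $x\in\mathcal{D}$ with $c^\top x<0$ and $d^\top x=0$; (2) there exists $r\in\mathbb{R}^m$ with $c^\top r<0$, $d^\top r=0$, and $x+\lambda r\in\mathcal{D}$ for all $x\in\mathcal{D}$ and all $\lambda\ge0$. *)

From HB Require Import structures.
From mathcomp Require Import all_boot all_order all_algebra.
From mathcomp Require Import reals.
Set Implicit Arguments. Unset Strict Implicit. Unset Printing Implicit Defensive.
Import Order.TTheory GRing.Theory Num.Theory.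
Local Open Scope ring_scope.

Definition dotp (R : realType) (m : nat) (u v : 'cV[R]_m) : R :=
  \sum_(i < m) u i 0 * v i 0.

Definition polyhedron (R : realType) (m : nat) (D : 'cV[R]_m -> Prop) : Prop :=
  exists (k : nat) (A : 'M[R]_(k, m)) (b : 'cV[R]_k),
    forall x : 'cV[R]_m, D x <-> (forall i : 'I_k, (A *m x) i 0 <= b i 0).

Definition frac_opt_val_neg_infty (R : realType) (m : nat)
    (D : 'cV[R]_m -> Prop) (c d : 'cV[R]_m) : Prop :=
  forall M : R, exists x : 'cV[R]_m,
    D x /\ 0 < dotp d x /\ dotp c x / dotp d x < M.

From HB Require Import structures.
From mathcomp Require Import all_boot all_order all_algebra.
From mathcomp Require Import reals ring lra.
Import Order.TTheory GRing.Theory Num.Theory.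
Set Implicit Arguments. Unset Strict Implicit. Unset Printing Implicit Defensive.
Local Open Scope ring_scope.

(* Charnes-Cooper: substituting y = x / d.x and s = 1 / d.x turns the
   fractional program into the linear program  min c.y  subject to
   a_i.y <= s b_i, s >= 0, d.y = 1.  A linear functional unbounded below on a
   polyhedron strictly decreases along some recession direction of it (by
   induction on the inequalities: one that such a direction would violate can
   be made tight and promoted to an equality); here this gives (y, s) with
   a_i.y <= s b_i, s >= 0, d.y = 0 and c.y < 0.  If s = 0, y is the ray of
   (2); if s > 0, y / s is the point of (1).  Conversely, moving from a
   feasible x1 along the ray of (2), or towards the point of (1), makes the
   ratio decrease linearly without bound. *)

Lemma sub_all2 (T : Type) (a1 a2 a3 : pred T) (s : seq T) :
  (forall x, a1 x -> a2 x -> a3 x) -> all a1 s -> all a2 s -> all a3 s.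
Proof. by move=> h; elim: s => //= x s IH /andP[? ?] /andP[? ?]; rewrite h ?IH. Qed.

Section RecessionDirection.
Variables (R : realFieldType) (V : lmodType R).
Local Notation constraint := ({scalar V} * R)%type.

Definition feasible (S E : seq constraint) (x : V) :=
  all (fun a : constraint => a.1 x <= a.2) S &&
  all (fun e : constraint => e.1 x == e.2) E.

Definition recession (S E : seq constraint) (z : V) :=
  all (fun a : constraint => a.1 z <= 0) S &&
  all (fun e : constraint => e.1 z == 0) E.

Definition unbounded_below (c : {scalar V}) (S E : seq constraint) :=
  forall M, exists2 x, feasible S E x & c x < M.

Lemma feasible_cons a S E x :
  feasible (a :: S) E x = (a.1 x <= a.2) && feasible S E x.
Proof. by rewrite /feasible /= andbA. Qed.

Lemma feasible_cons_eq e S E x :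
  feasible S (e :: E) x = (e.1 x == e.2) && feasible S E x.
Proof. by rewrite /feasible /= andbCA. Qed.

Lemma recession_cons a S E z :
  recession (a :: S) E z = (a.1 z <= 0) && recession S E z.
Proof. by rewrite /recession /= andbA. Qed.

Lemma recession_cons_eq e S E z :
  recession S (e :: E) z = (e.1 z == 0) && recession S E z.
Proof. by rewrite /recession /= andbCA. Qed.

Lemma recession_subr E x y :
  feasible [::] E x -> feasible [::] E y -> recession [::] E (x - y).
Proof.
by apply: sub_all2 => e /eqP ex /eqP ey; rewrite linearB ex ey subrr.
Qed.

Lemma feasible_addr_ray S E x z t :
  feasible S E x -> recession S E z -> 0 <= t -> feasible S E (x + t *: z).
Proof.
move=> /andP[Sx Ex] /andP[Sz Ez] t0; apply/andP; split.
  apply: sub_all2 Sx Sz => a ax az; rewrite linearD linearZ /=.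
  by rewrite -[a.2]addr0 lerD // mulr_ge0_le0.
apply: sub_all2 Ex Ez => e /eqP ex /eqP ez.
by rewrite linearD linearZ /= ex ez mulr0 addr0.
Qed.

Lemma unbounded_below_recession c S E :
  unbounded_below c S E -> exists2 z, recession S E z & c z < 0.
Proof.
elim: S E => [|a S IH] E unb.
  have [x0 Ex0 _] := unb 0; have [x Ex cx] := unb (c x0).
  by exists (x - x0); rewrite ?recession_subr // linearB subr_lt0.
have [z Sz cz] : exists2 z, recession S E z & c z < 0.
  apply: IH => M; have [x] := unb M.
  by rewrite feasible_cons => /andP[_ Sx]; exists x.
have [az | az] := leP (a.1 z) 0; first by exists z; rewrite ?recession_cons ?az.
have [w Sw cw] : exists2 w, recession S (a :: E) w & c w < 0.
  apply: IH => M; have [x] := unb M; rewrite feasible_cons => /andP[ax Sx] cx.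
  (* Sliding x along z until [a] becomes tight keeps it feasible and
     decreases c, so c stays unbounded once [a] is turned into an equality. *)
  pose t := (a.2 - a.1 x) / a.1 z.
  have t0 : 0 <= t by rewrite divr_ge0 ?subr_ge0 // ltW.
  exists (x + t *: z).
    rewrite feasible_cons_eq feasible_addr_ray // andbT linearD linearZ /=.
    by rewrite mulfVK ?(gt_eqF az) // addrC subrK.
  by rewrite linearD linearZ /= (le_lt_trans _ cx) // gerDl mulr_ge0_le0 // ltW.
move: Sw; rewrite recession_cons_eq => /andP[/eqP aw Sw].
by exists w; rewrite // recession_cons aw lexx.
Qed.

End RecessionDirection.

Lemma dotpD (R : realType) (m : nat) (u x y : 'cV[R]_m) :
  dotp u (x + y) = dotp u x + dotp u y.
Proof. by rewrite /dotp -big_split; apply: eq_bigr => i _; rewrite mxE mulrDr. Qed.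

Lemma dotpZ (R : realType) (m : nat) (u x : 'cV[R]_m) (t : R) :
  dotp u (t *: x) = t * dotp u x.
Proof. by rewrite /dotp mulr_sumr; apply: eq_bigr => i _; rewrite mxE mulrCA. Qed.

Lemma dotp0l (R : realType) (m : nat) (x : 'cV[R]_m) : dotp 0 x = 0.
Proof. by rewrite /dotp big1 // => i _; rewrite mxE mul0r. Qed.

Definition homog_form (R : realType) (m : nat) (u : 'cV[R]_m) (beta : R)
    (p : 'cV[R]_m * R^o) : R := dotp u p.1 + beta * p.2.

Lemma homog_form_is_scalar (R : realType) (m : nat) (u : 'cV[R]_m) beta :
  scalar (homog_form u beta).
Proof.
move=> t [x s] [y r]; rewrite /homog_form /= dotpD dotpZ.
by change (t *: s) with (t * s); ring.
Qed.

HB.instance Definition _ (R : realType) (m : nat) (u : 'cV[R]_m) (beta : R) :=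
  GRing.isLinear.Build R ('cV[R]_m * R^o)%type R *%R (homog_form u beta)
    (homog_form_is_scalar u beta).

Lemma homog_formE (R : realType) (m : nat) (u : 'cV[R]_m) beta y (s : R^o) :
  (homog_form u beta : {scalar _}) (y, s) = dotp u y + beta * s.
Proof. by []. Qed.

Lemma polyhedron_dotp (R : realType) (m : nat) (D : 'cV[R]_m -> Prop) :
  polyhedron D -> exists k (a : 'I_k -> 'cV[R]_m) (b : 'I_k -> R),
    forall x, D x <-> forall i, dotp (a i) x <= b i.
Proof.
move=> [k [A [b hD]]]; exists k, (fun i => (row i A)^T), (fun i => b i 0) => x.
have rowE i : dotp (row i A)^T x = (A *m x) i 0.
  by rewrite mxE; apply: eq_bigr => j _; rewrite !mxE.
by split=> [/hD Ax i | Ax]; [rewrite rowE | apply/hD => i; rewrite -rowE].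
Qed.

Section FractionalUnbounded.
Variables (R : realType) (m : nat) (D : 'cV[R]_m -> Prop) (c d : 'cV[R]_m).

Lemma frac_unbounded_of_line (alpha gamma : R) : gamma < 0 ->
  (forall t, 0 <= t -> exists x, [/\ D x, 0 < dotp d x &
                                    dotp c x / dotp d x = alpha + t * gamma]) ->
  frac_opt_val_neg_infty D c d.
Proof.
move=> g0 line M; pose t := `|alpha - M| / - gamma + 1.
have t0 : 0 <= t by rewrite addr_ge0 // divr_ge0 // oppr_ge0 ltW.
have [x [Dx dx ratio]] := line t t0; exists x; do 2!split=> //; rewrite ratio.
have -> : t * gamma = gamma - `|alpha - M| by rewrite /t; field; rewrite lt_eqF.
by have := ler_norm (alpha - M); lra.
Qed.

Lemma frac_unbounded_of_ray x1 r : D x1 -> 0 < dotp d x1 ->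
  dotp c r < 0 -> dotp d r = 0 ->
  (forall x l, D x -> 0 <= l -> D (x + l *: r)) ->
  frac_opt_val_neg_infty D c d.
Proof.
move=> Dx1 dx1 cr dr ray.
apply: (@frac_unbounded_of_line (dotp c x1 / dotp d x1) (dotp c r / dotp d x1)).
  by rewrite pmulr_llt0 ?invr_gt0.
move=> t t0; exists (x1 + t *: r); split; first exact: ray.
  by rewrite dotpD dotpZ dr mulr0 addr0.
by rewrite !dotpD !dotpZ dr mulr0 addr0 mulrDl mulrA.
Qed.

Lemma frac_unbounded_of_point x1 x0 :
  (forall x y l, D x -> D y -> 0 <= l <= 1 -> D ((1 - l) *: x + l *: y)) ->
  D x1 -> 0 < dotp d x1 -> D x0 -> dotp c x0 < 0 -> dotp d x0 = 0 ->
  frac_opt_val_neg_infty D c d.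
Proof.
move=> convD Dx1 dx1 Dx0 cx0 dx0.
apply: (@frac_unbounded_of_line (dotp c x1 / dotp d x1) (dotp c x0 / dotp d x1)).
  by rewrite pmulr_llt0 ?invr_gt0.
move=> t t0; have t1 : 0 < 1 + t by lra.
pose l := t / (1 + t).
have l1 : 1 - l = (1 + t)^-1 by rewrite /l; field; rewrite lt0r_neq0.
have l01 : 0 <= l <= 1.
  apply/andP; split; first by rewrite divr_ge0 // ltW.
  by rewrite -subr_ge0 l1 invr_ge0 ltW.
exists ((1 - l) *: x1 + l *: x0); split; first exact: convD.
  by rewrite dotpD !dotpZ dx0 mulr0 addr0 l1 mulr_gt0 ?invr_gt0.
rewrite !dotpD !dotpZ dx0 mulr0 addr0 l1 /l; field.
by rewrite !lt0r_neq0.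
Qed.

End FractionalUnbounded.

Section Halfspaces.
Variables (R : realType) (m k : nat) (D : 'cV[R]_m -> Prop).
Variables (a : 'I_k -> 'cV[R]_m) (b : 'I_k -> R).
Hypothesis hD : forall x, D x <-> forall i, dotp (a i) x <= b i.

Lemma halfspaces_convex x y l :
  D x -> D y -> 0 <= l <= 1 -> D ((1 - l) *: x + l *: y).
Proof.
move=> /hD Dx /hD Dy /andP[l0 l1]; apply/hD => i; rewrite dotpD !dotpZ.
have := Dx i; have := Dy i; rewrite -subr_ge0 in l1; nra.
Qed.

Lemma halfspaces_ray x r l :
  (forall i, dotp (a i) r <= 0) -> D x -> 0 <= l -> D (x + l *: r).
Proof.
move=> ar /hD Dx l0; apply/hD => i; rewrite dotpD dotpZ.
by rewrite -[b i]addr0 lerD // mulr_ge0_le0.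
Qed.

Lemma halfspaces_scale y s :
  0 < s -> (forall i, dotp (a i) y <= s * b i) -> D (s^-1 *: y).
Proof.
by move=> s0 ay; apply/hD => i; rewrite dotpZ mulrC ler_pdivrMr // mulrC.
Qed.

Section Homogenization.
Variables (c d : 'cV[R]_m).

(* The Charnes-Cooper linear program in (y, s): -s <= 0, a_i.y - b_i s <= 0
   and d.y = 1. *)
Let S : seq ({scalar ('cV[R]_m * R^o)%type} * R) :=
  (homog_form 0 (-1) : {scalar _}, 0) ::
  [seq (homog_form (a i) (- b i) : {scalar _}, 0) | i <- enum 'I_k].
Let E : seq ({scalar ('cV[R]_m * R^o)%type} * R) :=
  [:: (homog_form d 0 : {scalar _}, 1)].

Lemma frac_unbounded_homogeneous_recession :
  frac_opt_val_neg_infty D c d ->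
  exists y s, [/\ 0 <= s, forall i, dotp (a i) y <= s * b i,
                  dotp d y = 0 & dotp c y < 0].
Proof.
move=> unb.
have [[y s]] : exists2 z, recession S E z & (homog_form c 0 : {scalar _}) z < 0.
  apply: unbounded_below_recession => M; have [x [Dx [dx cx]]] := unb M.
  pose t := (dotp d x)^-1; have t0 : 0 < t by rewrite invr_gt0.
  exists (t *: x, t : R^o); last by rewrite homog_formE dotpZ mul0r addr0 mulrC.
  rewrite /feasible /= all_map !homog_formE dotp0l dotpZ mulVf ?(gt_eqF dx) //.
  rewrite add0r mulN1r oppr_le0 ltW //= mul0r addr0 eqxx !andbT.
  apply/allP => i _ /=; rewrite homog_formE dotpZ mulNr [b i * t]mulrC -mulrBr.
  by rewrite pmulr_rle0 // subr_le0; move: i; apply/hD.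
rewrite /recession /S /E /= all_map !homog_formE dotp0l !mul0r !addr0 add0r mulN1r.
move=> /andP[/andP[s0 /allP ay] /andP[/eqP dy _]] cy.
exists y, s; split=> // [|i]; first by rewrite -oppr_le0.
by have := ay i (mem_enum _ i); rewrite /= homog_formE mulNr subr_le0 mulrC.
Qed.

End Homogenization.
End Halfspaces.

Theorem theorem3p7 (R : realType) (m : nat) (D : 'cV[R]_m -> Prop)
    (c d : 'cV[R]_m) :
  polyhedron D ->
  (exists x : 'cV[R]_m, D x /\ 0 < dotp d x) ->
  (frac_opt_val_neg_infty D c d <->
   ((exists x : 'cV[R]_m, D x /\ dotp c x < 0 /\ dotp d x = 0) \/
    (exists r : 'cV[R]_m, dotp c r < 0 /\ dotp d r = 0 /\
       forall (x : 'cV[R]_m) (lam : R), D x -> 0 <= lam -> D (x + lam *: r)))).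
Proof.
move=> /polyhedron_dotp [k [a [b hD]]] [x1 [Dx1 dx1]]; split.
  move=> /(frac_unbounded_homogeneous_recession hD) [y [s [s0 ay dy cy]]].
  move: s0; rewrite le_eqVlt => /orP[/eqP s_eq0 | s_gt0].
    right; exists y; do 2!split=> //.
    move=> x l Dx l0; apply: (halfspaces_ray hD) => // i.
    by rewrite -[0](mul0r (b i)) s_eq0.
  left; exists (s^-1 *: y); split; first exact: (halfspaces_scale hD).
  by rewrite !dotpZ dy mulr0 pmulr_rlt0 ?invr_gt0.
case=> [[x0 [Dx0 [cx0 dx0]]] | [r [cr [dr ray]]]].
  exact: (frac_unbounded_of_point (halfspaces_convex hD) Dx1 dx1 Dx0).
exact: (frac_unbounded_of_ray Dx1 dx1 cr dr).
Qed.
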